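(* Let $n\ge2$ and $0\le\delta<\frac1n$. Let $B=I-\delta e^{n\times n}$ and let $\mathcal B=\{b_1,\dots,b_n\}$ be the set of columns of $B$. Let $\alpha=\frac{1}{\sqrt{\delta^2n-2\delta+1}}$ and $\mathcal P^\delta=\alpha\mathcal B\cup(-\alpha\mathcal B)=\{\alpha b_1,\dots,\alpha b_n,-\alpha b_1,\dots,-\alpha b_n\}$. Then $\mathcal P^\delta$ is a positive basis of $\mathbb R^n$ with cosine measure $\frac{1-\delta n}{\sqrt{n(\delta^2n-2\delta+1)}}$.
   Context: $e^{n\times n}$ is the $n\times n$ all-ones matrix. A finite set $\mathcal P$ is a positive basis if its positive span $\{\sum\lambda_id_i:\lambda_i\ge0\}$ is $\mathbb R^n$ and no $d\in\mathcal P$ lies in the positive span of $\mathcal P\setminus\{d\}$. The cosine measure of a finite $\mathcal S\subset\mathbb R^n\setminus\{\mathbf 0\}$ is $\min_{\|u\|=1}\max_{d\in\mathcal S}\frac{d^\top u}{\|d\|}$. *)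

From HB Require Import structures.
From mathcomp Require Import all_boot all_order all_algebra.
From mathcomp Require Import reals.
Set Implicit Arguments. Unset Strict Implicit. Unset Printing Implicit Defensive.
Import Order.TTheory GRing.Theory Num.Theory.
Local Open Scope ring_scope.

Section Defs.
Variable R : realType.
Variable n : nat.

Definition dotv (u v : 'cV[R]_n) : R := \sum_(i < n) u i 0 * v i 0.
Definition normv (u : 'cV[R]_n) : R := Num.sqrt (dotv u u).

Definition pspan (S : seq 'cV[R]_n) : 'cV[R]_n -> Prop :=
  fun v => exists lam : 'I_(size S) -> R,
    (forall i, 0 <= lam i) /\ v = \sum_(i < size S) lam i *: S`_i.

Definition positive_basis (S : seq 'cV[R]_n) : Prop :=
  (forall v, pspan S v) /\
  (forall d, d \in S -> ~ pspan [seq x <- S | x != d] d).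

Definition cosr (d u : 'cV[R]_n) : R := dotv d u / normv d.

(* c is the cosine measure of the (nonempty) finite set S:
   c = min_{||u|| = 1} max_{d in S} d^T u / ||d||, i.e. for every unit u the
   max is >= c, and the min is attained at some unit u where the max is <= c. *)
Definition cosine_measure_is (S : seq 'cV[R]_n) (c : R) : Prop :=
  (forall u, normv u = 1 -> exists2 d, d \in S & c <= cosr d u) /\
  (exists u, normv u = 1 /\ forall d, d \in S -> cosr d u <= c).
End Defs.

Definition ones_mx (R : realType) (n : nat) : 'M[R]_n := const_mx 1.

From HB Require Import structures.
From mathcomp Require Import all_boot all_order all_algebra.
From mathcomp Require Import reals ring lra.
Set Implicit Arguments.
Unset Strict Implicit.
Unset Printing Implicit Defensive.
Import Order.TTheory GRing.Theory Num.Theory.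
Local Open Scope ring_scope.

(* The columns b_i of B = I - delta J form a basis, since J^2 = n J makes the
   inverse of B again of the form I + k J; and {+-b_i} is a positive basis for
   any basis, because the j-th dual coordinate separates +-b_j from all the other
   vectors.  The b_i all have the same norm, so the cosine measure is
   min_u max_i |b_i.u| / |b_i|.  With s = sum_k u_k one has
   sum_i (b_i.u)^2 = |u|^2 - delta (2 - delta n) s^2 >= (1 - delta n)^2 |u|^2,
   by Cauchy-Schwarz s^2 <= n |u|^2; comparing the largest (b_i.u)^2 with the
   mean gives |b_i.u| >= (1 - delta n) |u| / sqrt n, with equality for every i
   at u = (1, ..., 1) / sqrt n. *)

Lemma mulmx_sum_col (R : comPzRingType) m p (A : 'M[R]_(m, p)) (v : 'cV_p) :
  A *m v = \sum_i v i 0 *: col i A.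
Proof.
by apply/colP => k /[!(mxE, summxE)]; apply: eq_bigr => i _ /[!mxE]; rewrite mulrC.
Qed.

Lemma sqr_sum_le_mul_sum_sqr (R : realFieldType) m (x : 'I_m -> R) :
  (\sum_i x i) ^+ 2 <= m%:R * \sum_i x i ^+ 2.
Proof.
case: m x => [|m] x; first by rewrite !big_ord0 expr0n mul0r.
set k : R := m.+1%:R; set s := \sum_i x i; set q := \sum_i x i ^+ 2.
have expand : \sum_i (k * x i - s) ^+ 2 = k * (k * q - s ^+ 2).
  have termE i : (k * x i - s) ^+ 2 = k ^+ 2 * x i ^+ 2 - 2 * k * s * x i + s ^+ 2.
    by ring.
  under eq_bigr do rewrite termE.
  rewrite big_split sumrB /= -!mulr_sumr sumr_const card_ord -/s -/q -mulr_natr /k; ring.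
have : 0 <= k * (k * q - s ^+ 2) by rewrite -expand sumr_ge0 // => i _; exact: sqr_ge0.
by rewrite pmulr_rge0 ?ltr0Sn // subr_ge0.
Qed.

Lemma exists_ge_mean (R : realDomainType) m (x : 'I_m -> R) :
  (0 < m)%N -> exists i, \sum_j x j <= m%:R * x i.
Proof.
move=> m_gt0; have [i _ imax] := @arg_maxP _ _ _ (Ordinal m_gt0) predT x isT.
exists i; rewrite mulr_natl -[m in x i *+ m]card_ord -sumr_const.
by apply: ler_sum => j _; exact: imax.
Qed.

Section EuclideanGeometry.
Variables (R : realType) (n : nat).
Implicit Types (a : R) (u v d : 'cV[R]_n).

Lemma dotvC u v : dotv u v = dotv v u.
Proof. by apply: eq_bigr => i _; rewrite mulrC. Qed.

Lemma dotvZl a u v : dotv (a *: u) v = a * dotv u v.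
Proof. by rewrite /dotv mulr_sumr; apply: eq_bigr => i _; rewrite mxE mulrA. Qed.

Lemma dotvNl u v : dotv (- u) v = - dotv u v.
Proof. by rewrite -scaleN1r dotvZl mulN1r. Qed.

Lemma dotvNr u v : dotv u (- v) = - dotv u v.
Proof. by rewrite dotvC dotvNl dotvC. Qed.

Lemma dotv_sumr m u (a : 'I_m -> R) (v : 'I_m -> 'cV[R]_n) :
  dotv u (\sum_i a i *: v i) = \sum_i a i * dotv u (v i).
Proof.
rewrite /dotv; under eq_bigr do rewrite summxE mulr_sumr.
rewrite exchange_big; apply: eq_bigr => i _; rewrite mulr_sumr.
by apply: eq_bigr => k _; rewrite mxE mulrCA.
Qed.

Lemma dotv_tr_row (A : 'M[R]_n) j v : dotv (row j A)^T v = (A *m v) j 0.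
Proof. by rewrite mxE; apply: eq_bigr => k _; rewrite !mxE. Qed.

Lemma dotvvE u : dotv u u = \sum_i u i 0 ^+ 2.
Proof. by apply: eq_bigr => i _; rewrite expr2. Qed.

Lemma dotvv_ge0 u : 0 <= dotv u u.
Proof. by rewrite dotvvE sumr_ge0 // => i _; exact: sqr_ge0. Qed.

Lemma dotvv_normv u : dotv u u = normv u ^+ 2.
Proof. by rewrite sqr_sqrtr // dotvv_ge0. Qed.

Lemma normvZ a d : normv (a *: d) = `|a| * normv d.
Proof.
by rewrite /normv dotvZl dotvC dotvZl mulrA -expr2 sqrtrM ?sqr_ge0 // sqrtr_sqr.
Qed.

Lemma normvN d : normv (- d) = normv d.
Proof. by rewrite -scaleN1r normvZ normrN1 mul1r. Qed.

Lemma cosrZl a d u : 0 < a -> cosr (a *: d) u = cosr d u.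
Proof.
move=> a_gt0; rewrite /cosr normvZ dotvZl gtr0_norm // invfM mulrACA mulfV ?mul1r //.
exact: lt0r_neq0.
Qed.

Lemma cosrNl d u : cosr (- d) u = - cosr d u.
Proof. by rewrite /cosr normvN dotvNl mulNr. Qed.

Lemma normv_const a : normv (const_mx a : 'cV[R]_n) = `|a| * Num.sqrt n%:R.
Proof.
rewrite /normv dotvvE; under eq_bigr do rewrite mxE.
by rewrite sumr_const card_ord -[_ *+ n]mulr_natr sqrtrM ?sqr_ge0 // sqrtr_sqr.
Qed.

End EuclideanGeometry.

Section PlusMinusFamilies.
Variables (R : realType) (n m : nat) (d : 'I_m -> 'cV[R]_n).

Definition pm_seq : seq 'cV[R]_n :=
  [seq d i | i <- enum 'I_m] ++ [seq - d i | i <- enum 'I_m].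

Lemma size_pm_seq : size pm_seq = (m + m)%N.
Proof. by rewrite size_cat !size_map -enumT size_enum_ord. Qed.

Lemma nth_pm_seq_lshift i : pm_seq`_(lshift m i) = d i.
Proof.
rewrite /pm_seq nth_cat size_map -?enumT size_enum_ord /= ltn_ord.
by rewrite (nth_map i) ?size_enum_ord ?nth_ord_enum.
Qed.

Lemma nth_pm_seq_rshift i : pm_seq`_(rshift m i) = - d i.
Proof.
rewrite /pm_seq nth_cat size_map -?enumT size_enum_ord /= ltnNge leq_addr /= addKn.
by rewrite (nth_map i) ?size_enum_ord ?nth_ord_enum.
Qed.

Lemma pm_seqP y : reflect (exists i, y = d i \/ y = - d i) (y \in pm_seq).
Proof.
rewrite mem_cat; apply: (iffP orP) => [[] /mapP [i _ ->]|[i [->|->]]].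
- by exists i; left.
- by exists i; right.
- by left; apply/mapP; exists i; rewrite ?mem_enum.
- by right; apply/mapP; exists i; rewrite ?mem_enum.
Qed.

Lemma pspan_pm_seq (x : 'I_m -> R) : pspan pm_seq (\sum_i x i *: d i).
Proof.
pose lam k := match split k with
  | inl i => (`|x i| + x i) / 2 | inr i => (`|x i| - x i) / 2 end.
exists (lam \o cast_ord size_pm_seq); split => [k | ].
  rewrite /= /lam; case: split => i; apply: divr_ge0 => //;
    have := ler_norm (x i); have := ler_norm (- x i); rewrite normrN; lra.
rewrite (reindex (cast_ord (esym size_pm_seq))) /=; last first.
  by exists (cast_ord size_pm_seq) => k _; rewrite ?cast_ordK ?cast_ordKV.
rewrite big_split_ord /= -big_split /=; apply: eq_bigr => i _.
rewrite !cast_ordKV /lam (unsplitK (inl _ i)) (unsplitK (inr _ i)).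
rewrite nth_pm_seq_lshift nth_pm_seq_rshift scalerN -scalerBl; congr (_ *: _).
by field.
Qed.

Lemma cosine_measure_pm_seq c :
  (forall u, normv u = 1 -> exists i, c <= `|cosr (d i) u|) ->
  (exists2 u, normv u = 1 & forall i, `|cosr (d i) u| <= c) ->
  cosine_measure_is pm_seq c.
Proof.
move=> lower [u0 u0_unit upper]; split.
- move=> u /lower [i]; have [cos_ge0|cos_lt0] := leP 0 (cosr (d i) u).
  + by rewrite ger0_norm // => ?; exists (d i) => //; apply/pm_seqP; exists i; left.
  + rewrite ltr0_norm // -cosrNl => ?; exists (- d i) => //.
    by apply/pm_seqP; exists i; right.
- exists u0; split => // y /pm_seqP [i [->|->]]; last rewrite cosrNl.
  + exact: le_trans (ler_norm _) (upper i).
  + by apply: le_trans (upper i); rewrite -normrN ler_norm.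
Qed.

End PlusMinusFamilies.

Lemma not_pspan_separated (R : realType) n (S : seq 'cV[R]_n) (w y : 'cV[R]_n) :
  (forall x, x \in S -> dotv w x <= 0) -> 0 < dotv w y -> ~ pspan S y.
Proof.
move=> S_le0 w_y_gt0 [lam [lam_ge0 y_eq]]; move: w_y_gt0; rewrite y_eq.
apply/negP; rewrite -leNgt dotv_sumr.
by apply: sumr_le0 => i _; rewrite mulr_ge0_le0 // S_le0 // mem_nth.
Qed.

Section ColumnsOfUnitMatrix.
Variables (R : realType) (n : nat) (B : 'M[R]_n).
Hypothesis B_unit : B \in unitmx.
Local Notation cols := (pm_seq (fun i : 'I_n => col i B)).

Lemma dotv_row_invmx_col i j : dotv (row j (invmx B))^T (col i B) = (i == j)%:R.
Proof.
by rewrite dotv_tr_row colE mulmxA mulVmx // mul1mx mxE eqxx andbT eq_sym.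
Qed.

Lemma col_decomposition v : v = \sum_i (invmx B *m v) i 0 *: col i B.
Proof. by rewrite -mulmx_sum_col mulKVmx. Qed.

Lemma pm_seq_col_minimal y :
  y \in cols -> ~ pspan [seq x <- cols | x != y] y.
Proof.
case/pm_seqP => j [->|->].
- apply: (not_pspan_separated (w := (row j (invmx B))^T)); last first.
    by rewrite dotv_row_invmx_col eqxx ltr01.
  move=> x; rewrite mem_filter => /andP [x_neq /pm_seqP [i [x_eq|x_eq]]];
    rewrite x_eq in x_neq *; last by rewrite dotvNr dotv_row_invmx_col oppr_le0.
  rewrite dotv_row_invmx_col; have [ij|//] := eqVneq i j.
  by rewrite ij eqxx in x_neq.
- apply: (not_pspan_separated (w := - (row j (invmx B))^T)); last first.
    by rewrite dotvNl dotvNr opprK dotv_row_invmx_col eqxx ltr01.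
  move=> x; rewrite mem_filter => /andP [x_neq /pm_seqP [i [x_eq|x_eq]]];
    rewrite x_eq in x_neq *; first by rewrite dotvNl dotv_row_invmx_col oppr_le0.
  rewrite dotvNl dotvNr opprK dotv_row_invmx_col; have [ij|//] := eqVneq i j.
  by rewrite ij eqxx in x_neq.
Qed.

Theorem positive_basis_pm_seq_col : positive_basis cols.
Proof.
split=> [v|]; last exact: pm_seq_col_minimal.
by rewrite [v]col_decomposition; exact: pspan_pm_seq.
Qed.

End ColumnsOfUnitMatrix.

Section PerturbedIdentity.
Variables (R : realType) (n : nat) (delta : R).
Local Notation J := (ones_mx R n).
Local Notation B := (1%:M - delta *: J).
Local Notation Q := (delta ^+ 2 * n%:R - 2 * delta + 1).

Lemma ones_mx_mul : J *m J = n%:R *: J.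
Proof.
apply/matrixP => i j; rewrite !mxE; under eq_bigr do rewrite !mxE mul1r.
by rewrite sumr_const card_ord mulr1.
Qed.

Lemma perturbed_identity_mulV :
  delta * n%:R != 1 -> B *m (1%:M + (delta / (1 - delta * n%:R)) *: J) = 1%:M.
Proof.
move=> dn_neq1; set k := delta / _.
rewrite mulmxBl mul1mx -scalemxAl mulmxDr mulmx1 -scalemxAr ones_mx_mul.
rewrite !scalerDr !scalerA -scalerDl -addrA -scalerBl.
have -> : k - (delta + delta * k * n%:R) = 0.
  by rewrite /k; field; rewrite subr_eq0 eq_sym.
by rewrite scale0r addr0.
Qed.

Lemma perturbed_identity_unit : delta * n%:R != 1 -> B \in unitmx.
Proof. by move=> /perturbed_identity_mulV /mulmx1_unit []. Qed.

Lemma col_perturbed_identity i k : col i B k 0 = (k == i)%:R - delta.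
Proof. by rewrite !mxE mulr1. Qed.

Lemma sum_col_perturbed_identity i : \sum_k col i B k 0 = 1 - delta * n%:R.
Proof.
under eq_bigr do rewrite col_perturbed_identity.
rewrite sumrB sumr_const card_ord -[delta *+ n]mulr_natr (bigD1 i) //= eqxx.
by rewrite big1 ?addr0 // => k /negbTE ->.
Qed.

Lemma dotv_col_perturbed_identity i u :
  dotv (col i B) u = u i 0 - delta * \sum_k u k 0.
Proof.
rewrite /dotv; under eq_bigr do rewrite col_perturbed_identity mulrBl.
rewrite sumrB -mulr_sumr (bigD1 i) //= eqxx mul1r big1 ?addr0 //.
by move=> k /negbTE ->; rewrite mul0r.
Qed.

Lemma dotv_col_perturbed_identity_const i a :
  dotv (col i B) (const_mx a) = a * (1 - delta * n%:R).
Proof.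
rewrite dotv_col_perturbed_identity mxE; under eq_bigr do rewrite mxE.
by rewrite sumr_const card_ord -[a *+ n]mulr_natr; ring.
Qed.

Lemma normv_col_perturbed_identity i : normv (col i B) = Num.sqrt Q.
Proof.
rewrite /normv dotv_col_perturbed_identity sum_col_perturbed_identity.
by rewrite col_perturbed_identity eqxx /=; congr Num.sqrt; ring.
Qed.

Lemma sum_sqr_dotv_col_perturbed_identity u :
  \sum_i dotv (col i B) u ^+ 2
    = dotv u u - delta * (2 - delta * n%:R) * (\sum_k u k 0) ^+ 2.
Proof.
set s := \sum_k u k 0.
have termE i :
    dotv (col i B) u ^+ 2 = u i 0 ^+ 2 - 2 * delta * s * u i 0 + delta ^+ 2 * s ^+ 2.
  by rewrite dotv_col_perturbed_identity -/s; ring.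
under eq_bigr do rewrite termE.
rewrite big_split sumrB /= -mulr_sumr -dotvvE -/s sumr_const card_ord -mulr_natr; ring.
Qed.

Lemma exists_sqr_dotv_col_perturbed_identity_ge u :
  (0 < n)%N -> 0 <= delta -> delta * n%:R <= 2 ->
  exists i, (1 - delta * n%:R) ^+ 2 * dotv u u <= n%:R * dotv (col i B) u ^+ 2.
Proof.
move=> n_gt0 delta_ge0 dn_le2.
have [i mean_le] := exists_ge_mean (fun i => dotv (col i B) u ^+ 2) n_gt0.
exists i; apply: le_trans mean_le; rewrite sum_sqr_dotv_col_perturbed_identity.
have cauchy_schwarz := sqr_sum_le_mul_sum_sqr (fun k => u k 0); rewrite -dotvvE in cauchy_schwarz.
have : 0 <= delta * (2 - delta * n%:R) * (n%:R * dotv u u - (\sum_k u k 0) ^+ 2).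
  by rewrite !mulr_ge0 // subr_ge0.
rewrite (_ : (1 - delta * n%:R) ^+ 2 = 1 - delta * (2 - delta * n%:R) * n%:R); last by ring.
lra.
Qed.

Section CosineBounds.
Hypotheses (n_gt0 : (0 < n)%N) (delta_ge0 : 0 <= delta) (dn_lt1 : delta * n%:R < 1).
Local Notation c := ((1 - delta * n%:R) / Num.sqrt (n%:R * Q)).

Lemma perturbed_sqr_norm_gt0 : 0 < Q.
Proof.
have delta_lt1 : delta < 1 by apply: le_lt_trans dn_lt1; rewrite ler_peMr // ler1n.
rewrite (_ : Q = (1 - delta) ^+ 2 + delta ^+ 2 * (n%:R - 1)); last by ring.
by rewrite ltr_pwDl ?exprn_gt0 ?subr_gt0 // mulr_ge0 ?sqr_ge0 // subr_ge0 ler1n.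
Qed.

Lemma exists_abs_cosr_col_perturbed_identity_ge u :
  normv u = 1 -> exists i, c <= `|cosr (col i B) u|.
Proof.
move=> u_unit; have dn_le1 := ltW dn_lt1.
have dn_le2 : delta * n%:R <= 2 by apply: le_trans dn_le1 _; rewrite ler1n.
have [i large] := exists_sqr_dotv_col_perturbed_identity_ge u n_gt0 delta_ge0 dn_le2.
exists i; move: large => /ler_wsqrtr.
rewrite dotvv_normv u_unit expr1n mulr1 sqrtr_sqr sqrtrM ?ler0n // sqrtr_sqr.
rewrite ger0_norm ?subr_ge0 // => large.
rewrite /cosr normv_col_perturbed_identity sqrtrM ?ler0n // invfM mulrA normrM.
rewrite [`|_^-1|]ger0_norm ?invr_ge0 ?sqrtr_ge0 //.
rewrite ler_pM2r ?invr_gt0 ?sqrtr_gt0 ?perturbed_sqr_norm_gt0 //.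
by rewrite ler_pdivrMr ?sqrtr_gt0 ?ltr0n // [_ * Num.sqrt _]mulrC.
Qed.

Lemma normv_const_invsqrt : normv (const_mx (Num.sqrt n%:R)^-1 : 'cV[R]_n) = 1.
Proof.
rewrite normv_const ger0_norm ?invr_ge0 ?sqrtr_ge0 //.
by rewrite mulVf // gt_eqF ?sqrtr_gt0 ?ltr0n.
Qed.

Lemma abs_cosr_col_perturbed_identity_const i :
  `|cosr (col i B) (const_mx (Num.sqrt n%:R)^-1)| = c.
Proof.
have sqrt_n_gt0 : 0 < Num.sqrt n%:R :> R by rewrite sqrtr_gt0 ltr0n.
have sqrt_Q_gt0 : 0 < Num.sqrt Q by rewrite sqrtr_gt0 perturbed_sqr_norm_gt0.
rewrite /cosr dotv_col_perturbed_identity_const normv_col_perturbed_identity.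
rewrite ger0_norm ?divr_ge0 ?mulr_ge0 ?invr_ge0 ?subr_ge0 ?ltW //.
by rewrite sqrtrM ?ler0n //; field; rewrite !gt_eqF.
Qed.

End CosineBounds.

End PerturbedIdentity.

Theorem theorem15 (R : realType) (n : nat) (delta : R)
  (hn : (2 <= n)%N) (hd0 : 0 <= delta) (hd1 : delta < 1 / n%:R) :
  let B : 'M[R]_n := 1%:M - delta *: ones_mx R n in
  let alpha : R := 1 / Num.sqrt (delta ^+ 2 * n%:R - 2 * delta + 1) in
  let P : seq 'cV[R]_n :=
    [seq alpha *: col i B | i <- enum 'I_n] ++
    [seq - (alpha *: col i B) | i <- enum 'I_n] in
  positive_basis P /\
  cosine_measure_is P ((1 - delta * n%:R) /
     Num.sqrt (n%:R * (delta ^+ 2 * n%:R - 2 * delta + 1))).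
Proof.
move=> B alpha P.
have n_gt0 : (0 < n)%N by apply: leq_trans hn.
have dn_lt1 : delta * n%:R < 1 by rewrite -ltr_pdivlMr ?ltr0n.
have alpha_gt0 : 0 < alpha.
  by rewrite divr_gt0 // sqrtr_gt0 perturbed_sqr_norm_gt0.
split.
- have -> : P = pm_seq (fun i => col i (alpha *: B)).
    by congr (_ ++ _); apply: eq_map => i; [|congr (- _)]; apply/colP => k; rewrite !mxE.
  apply: positive_basis_pm_seq_col.
  by rewrite unitmxZ ?unitfE ?gt_eqF // perturbed_identity_unit // lt_eqF.
- apply: cosine_measure_pm_seq => [u u_unit|].
    have [i ?] := exists_abs_cosr_col_perturbed_identity_ge n_gt0 hd0 dn_lt1 u_unit.
    by exists i; rewrite cosrZl.
  exists (const_mx (Num.sqrt n%:R)^-1) => [|i]; first exact: normv_const_invsqrt.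
  by rewrite cosrZl // abs_cosr_col_perturbed_identity_const.
Qed.
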